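(* Let $n\ge2$ and let $\mathsf u$ be any subword of $\bm\lambda_n$. Write $\mathsf r^{\mathsf u}=[r_1,\dots,r_m]$ and let $i_j$ denote the index (position in $\bm\lambda_n$) of the skip corresponding to $r_j$. Then for each $j$, $$(r_1\cdots r_{j-1})\,r_j\,(r_{j-1}\cdots r_1)=\Big(\!\Big(0,\; i_j+\Big\lfloor \tfrac{i_j-1}{n-1}\Big\rfloor\Big)\!\Big).$$
   Context: $\widetilde S_n$ is the group, under composition, of bijections $w:\mathbb Z\to\mathbb Z$ with $w(i+n)=w(i)+n$ and $\sum_{i=1}^n w(i)=\binom{n+1}2$. For $i\not\equiv j\pmod n$, $(\!(i,j)\!)$ swaps $i+kn$ and $j+kn$ for all $k\in\mathbb Z$; $s_i=(\!(i,i+1)\!)$, $i\in\{0,\dots,n-1\}$. $\bm\lambda_n$ is the word $[s_0,\dots,s_{n-1}]$ repeated $n-1$ times with $j$-th letter $\sigma_j=s_{(j-1)\bmod n}$ (index in $\{0,\dots,n-1\}$). A subword is $\mathsf u=[u_1,\dots,u_{n(n-1)}]$ with $u_j\in\{\sigma_j,e\}$; $j$ is a skip if $u_j=e$. $u_{(j)}=u_1\cdots u_j$, $u_{(0)}=e$. $\textsc{inv}(\mathsf u)=[t_1,\dots,t_{n(n-1)}]$ with $t_j=u_{(j-1)}\sigma_ju_{(j-1)}^{-1}$, and $\mathsf r^{\mathsf u}$ is the subsequence of the $t_j$ over skips $j$, in increasing order of $j$. *)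

(* Affine permutations are modelled as functions int -> int,
   group product = composition: (u v) x = u (v x). *)
From mathcomp Require Import all_boot all_order all_algebra.
Set Implicit Arguments. Unset Strict Implicit. Unset Printing Implicit Defensive.
Import GRing.Theory Num.Theory.
Local Open Scope ring_scope.

(* ((a, b)) for a <> b mod n : swaps a + kn and b + kn for all k. *)
Definition refl (n : nat) (a b : int) (x : int) : int :=
  if ((x - a) %% n == 0)%Z then x + (b - a)
  else if ((x - b) %% n == 0)%Z then x + (a - b)
  else x.

Definition sref (n : nat) (i : int) : int -> int := refl n i (i + 1).

Definition prodf (fs : seq (int -> int)) : int -> int :=
  foldr (fun f g => f \o g) id fs.

(* j-th letter of lambda_n (j >= 1): sigma_j = s_{(j-1) mod n} *)
Definition sigma (n j : nat) : int -> int := sref n (((j.-1) %% n)%N)%:Z.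

(* A subword u is encoded by b : seq bool of size n(n-1); position j (1-based)
   is a letter (u_j = sigma_j) iff nth false b j.-1 is true, a skip otherwise.
   uword n b j = [u_1; ...; u_j] as a list of elements. *)
Definition uword (n : nat) (b : seq bool) (j : nat) : seq (int -> int) :=
  [seq (if nth false b k.-1 then sigma n k else id) | k <- iota 1 j].

(* t_j = u_(j-1) sigma_j u_(j-1)^{-1}; since u_(j-1) = u_1 ... u_(j-1) is a
   product of involutions, u_(j-1)^{-1} = u_(j-1) ... u_1. *)
Definition tinv (n : nat) (b : seq bool) (j : nat) : int -> int :=
  prodf (uword n b j.-1 ++ sigma n j :: rev (uword n b j.-1)).

Definition skips (b : seq bool) : seq nat :=
  [seq k <- iota 1 (size b) | ~~ nth false b k.-1].

Definition rseq (n : nat) (b : seq bool) : seq (int -> int) :=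
  [seq tinv n b k | k <- skips b].

From mathcomp Require Import all_boot all_order all_algebra.
From mathcomp Require Import ring zify.
Set Implicit Arguments. Unset Strict Implicit. Unset Printing Implicit Defensive.
Import GRing.Theory Num.Theory.
Local Open Scope ring_scope.

(* Skipping position k of u inserts t_k = u_(k-1) sigma_k u_(k-1)^-1 on the left
   of the prefix product, so u_1...u_k = r_m...r_1 sigma_1...sigma_k, where
   r_1, ..., r_m are the reflections of the skips up to k.  Hence, if i is the
   j-th skip, r_1...r_(j-1) r_j r_(j-1)...r_1 = sigma_1...sigma_(i-1) sigma_i
   sigma_(i-1)...sigma_1, whatever the letters of u are.  As sigma_(k+1) is sigma_k
   conjugated by the translation x |-> x + 1, this word is ((0, e_i)) with
   e_1 = 1 and e_(i+1) = s_0 (e_i + 1).  Writing i - 1 = q (n-1) + r gives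
   e_i = q n + r + 1, never divisible by n, and the recursion is solved by
   e_i = i + (i-1) %/ (n-1). *)

Section Reflections.
Variable n : nat.

Lemma reflE (a b x : int) : refl n a b x =
  if (n %| x - a)%Z then x + (b - a) else if (n %| x - b)%Z then x + (a - b) else x.
Proof.
have dvdE m : ((m %% n)%Z == 0) = (n %| m)%Z by apply/eqP/dvdz_mod0P.
by rewrite /refl !dvdE.
Qed.

Lemma refl_involutive (a b : int) : ~~ (n %| b - a)%Z -> involutive (refl n a b).
Proof.
move=> nab x; rewrite [refl n a b x]reflE.
have [xa|nxa] := boolP (n %| x - a)%Z.
  rewrite reflE (_ : x + (b - a) - a = x - a + (b - a)); last by ring.
  by rewrite rpredDl // (negbTE nab) (_ : x + (b - a) - b = x - a) ?xa; ring.
have [xb|nxb] := boolP (n %| x - b)%Z; last by rewrite reflE (negbTE nxa) (negbTE nxb).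
by rewrite reflE (_ : x + (a - b) - a = x - b) ?xb; ring.
Qed.

Lemma refl_conj (g : int -> int) : injective g ->
    (forall x k : int, g (x + k * n) = g x + k * n) ->
  forall a b x, g (refl n a b x) = refl n (g a) (g b) (g x).
Proof.
move=> g_inj gn a b x.
have dvd_g c : (n %| g x - g c)%Z = (n %| x - c)%Z.
  apply/dvdzP/dvdzP => -[k xc]; exists k.
    have -> : x = c + k * n by apply: g_inj; rewrite gn -xc; ring.
    by rewrite addrAC subrr add0r.
  have -> : x = c + k * n by rewrite -xc; ring.
  by rewrite gn; ring.
rewrite !reflE !dvd_g.
case: ifP => [/dvdzP[k xa] | _].
  have -> : x = a + k * n by rewrite -xa; ring.
  by rewrite (_ : a + k * n + (b - a) = b + k * n) ?gn; ring.
case: ifP => [/dvdzP[k xb] | _] //.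
have -> : x = b + k * n by rewrite -xb; ring.
by rewrite (_ : b + k * n + (a - b) = a + k * n) ?gn; ring.
Qed.

Lemma refl_periodic a b (x k : int) : refl n a b (x + k * n) = refl n a b x + k * n.
Proof.
have dvdE c : (n %| x + k * n - c)%Z = (n %| x - c)%Z.
  by rewrite addrAC rpredDr // dvdz_mull.
by rewrite !reflE !dvdE; case: ifP => _; [|case: ifP => _]; ring.
Qed.

Lemma refl_shift a b (x : int) : refl n a b x + 1 = refl n (a + 1) (b + 1) (x + 1).
Proof.
by apply: (@refl_conj (fun y => y + 1)) => [y z /addIr | y k] //; rewrite addrAC.
Qed.

Lemma refl_mod (a1 a2 d : int) :
  (a1 = a2 %[mod n])%Z -> refl n a1 (a1 + d) =1 refl n a2 (a2 + d).
Proof.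
move=> /eqP; rewrite eqz_mod_dvd => a12 x.
have dvdE c : (n %| x - (a1 + c))%Z = (n %| x - (a2 + c))%Z.
  have -> : x - (a2 + c) = x - (a1 + c) + (a1 - a2) by ring.
  by rewrite (rpredDr _ a12).
have := dvdE 0; rewrite !addr0 => dvdE0.
rewrite !reflE dvdE0 dvdE.
have -> : a1 + d - a1 = a2 + d - a2 by ring.
by have -> : a1 - (a1 + d) = a2 - (a2 + d) by ring.
Qed.
End Reflections.

Lemma sref_involutive (n : nat) (c : int) : n != 1%N -> involutive (sref n c).
Proof. by move=> n1; apply: refl_involutive; rewrite addrAC subrr add0r dvdz1. Qed.

Lemma sref_conj (n : nat) (c a b x : int) : n != 1%N ->
  sref n c (refl n a b x) = refl n (sref n c a) (sref n c b) (sref n c x).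
Proof.
move=> n1; apply: refl_conj; first exact/inv_inj/sref_involutive.
exact: refl_periodic.
Qed.

Lemma sigma_shift (n k : nat) (x : int) : (0 < k)%N ->
  sigma n k.+1 (x + 1) = sigma n k x + 1.
Proof.
case: k => // k _; rewrite /sigma /sref refl_shift /=; apply: refl_mod.
by rewrite -!modz_nat modz_mod modzDml -addn1 PoszD.
Qed.

Lemma prodf_cat (L1 L2 : seq (int -> int)) : prodf (L1 ++ L2) =1 prodf L1 \o prodf L2.
Proof. by elim: L1 => //= f L IH x; rewrite /= IH. Qed.

Lemma prodf_rcons (L : seq (int -> int)) f : prodf (rcons L f) =1 prodf L \o f.
Proof. by move=> x; rewrite -cats1 prodf_cat. Qed.

Lemma prodf_conj (L : seq (int -> int)) f :
  prodf (L ++ f :: rev L) =1 prodf L \o f \o prodf (rev L).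
Proof. by move=> x; rewrite prodf_cat. Qed.

Lemma prodf_map_comm (T : eqType) (F F' : T -> int -> int) (g : int -> int) s :
  {in s, forall a x, F' a (g x) = g (F a x)} ->
  forall x, prodf (map F' s) (g x) = g (prodf (map F s) x).
Proof.
elim: s => //= a s IH Fg x.
have Fg_s : {in s, forall b x, F' b (g x) = g (F b x)}.
  by move=> b sb; apply: Fg; rewrite inE sb orbT.
by rewrite /= IH // Fg ?mem_head.
Qed.

Lemma prodf_map_revK (T : Type) (h : T -> int -> int) s :
  (forall a, involutive (h a)) -> cancel (prodf (rev (map h s))) (prodf (map h s)).
Proof.
move=> hK; elim: s => //= a s IH x.
by rewrite rev_cons prodf_rcons /= IH hK.
Qed.

Lemma prodf_mapK (T : Type) (h : T -> int -> int) s :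
  (forall a, involutive (h a)) -> cancel (prodf (map h s)) (prodf (rev (map h s))).
Proof. by move=> hK x; have := prodf_map_revK (rev s) hK x; rewrite map_rev revK. Qed.

Section Endpoint.
Variable n : nat.
Hypothesis n_gt1 : (1 < n)%N.

Definition endpoint (i : nat) : nat := i + i.-1 %/ n.-1.

Lemma endpointE q r : (r < n.-1)%N -> endpoint (q * n.-1 + r).+1 = (q * n + r.+1)%N.
Proof.
move=> hr; have m_gt0 : (0 < n.-1)%N by case: (n.-1) hr.
rewrite /endpoint /= divnMDl // divn_small // addn0; have := n_gt1; nia.
Qed.

Lemma sref_endpoint i : sref n 0 ((endpoint i.+1)%:Z + 1) = (endpoint i.+2)%:Z.
Proof.
have m_gt0 : (0 < n.-1)%N by rewrite -ltnS prednK // ltnW.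
rewrite (divn_eq i n.-1); set q := (i %/ n.-1)%N; set r := (i %% n.-1)%N.
have hr : (r < n.-1)%N := ltn_pmod i m_gt0.
have dvd_nat (m : nat) : (n %| m%:Z)%Z = (n %| m)%N by [].
have dvd_qn k : (n %| q * n + k)%N = (n %| k)%N by rewrite dvdn_addr ?dvdn_mull.
rewrite endpointE // /sref reflE add0r !subr0 addrK -!PoszD !dvd_nat -addnA !dvd_qn.
rewrite [(n %| r.+1)%N]gtnNdvd //; last by lia.
have [lt|eq] : (r.+1 < n.-1)%N \/ r.+1 = n.-1 by lia.
  rewrite gtnNdvd //; last by lia.
  by rewrite -addnS endpointE // addn1.
have -> : (q * n.-1 + r).+2 = (q.+1 * n.-1 + 0).+1 by rewrite addn0 mulSnr -eq addnS.
rewrite (_ : r.+1 + 1 = n)%N; last by lia.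
by rewrite dvdnn endpointE // mulSnr; congr Posz; lia.
Qed.

Lemma sigma_word_conj i :
  prodf (map (sigma n) (iota 1 i ++ i.+1 :: rev (iota 1 i))) =1 refl n 0 (endpoint i.+1).
Proof.
have n_neq1 : n != 1%N by rewrite neq_ltn n_gt1 orbT.
have sigma1 : sigma n 1 = sref n 0 by rewrite /sigma mod0n.
have sref01 : sref n 0 (0 + 1) = 0.
  by rewrite /sref reflE !add0r subr0 dvdz1 (negbTE n_neq1) subrr dvdz0.
elim: i => [|i IH] x; first by rewrite /= sigma1 /endpoint div0n.
pose s := iota 1 i ++ i.+1 :: rev (iota 1 i).
have -> : iota 1 i.+1 ++ i.+2 :: rev (iota 1 i.+1) = 1%N :: rcons (map (addn 1) s) 1%N.
  by rewrite /= -[2%N]/(1 + 1)%N iotaDl rev_cons /s map_cat /= map_rev rcons_cat.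
rewrite /= map_rcons prodf_rcons -map_comp /= sigma1 -[sref n 0 x](subrK 1).
rewrite (prodf_map_comm (F := sigma n) (g := +%R^~ 1)) => [|a sa y]; last first.
  by apply: sigma_shift; move: sa; rewrite mem_cat inE mem_rev mem_iota; lia.
by rewrite IH refl_shift subrK sref_conj // sref_involutive // sref01 sref_endpoint.
Qed.
End Endpoint.

Lemma take_filter_iota (p : pred nat) m N j : let s := filter p (iota m N) in
  (j < size s)%N -> take j s = filter p (iota m (nth 0 s j - m)).
Proof.
move=> s js; set i := nth 0%N s j.
have /[!(mem_filter, mem_iota)] /andP[pi /andP[mi iN]] : i \in s by exact: mem_nth.
have iota_split : iota m N = iota m (i - m) ++ i :: iota i.+1 (m + N - i.+1).
  have N_split : N = (i - m + (m + N - i.+1).+1)%N by lia.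
  by rewrite {1}N_split iotaD subnKC.
have s_split : s = filter p (iota m (i - m)) ++ i :: filter p (iota i.+1 (m + N - i.+1)).
  by rewrite /s iota_split filter_cat /= pi.
have i_new : i \notin filter p (iota m (i - m)).
  by rewrite mem_filter mem_iota subnKC // ltnn !andbF.
have s_uniq : uniq s by rewrite filter_uniq // iota_uniq.
by rewrite -[j in take j](index_uniq 0 js s_uniq) -/i s_split take_pivot.
Qed.

Section Subword.
Variables (n : nat) (b : seq bool).
Hypothesis n_neq1 : n != 1%N.

Definition rseq_upto k := [seq tinv n b j | j <- iota 1 k & ~~ nth false b j.-1].

Let letter k := if nth false b k.-1 then sigma n k else id.

Lemma sigma_involutive k : involutive (sigma n k).
Proof. exact: sref_involutive. Qed.

Lemma letter_involutive k : involutive (letter k).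
Proof. by rewrite /letter; case: ifP => // _; apply: sigma_involutive. Qed.

Lemma tinv_involutive k : involutive (tinv n b k).
Proof.
move=> x; rewrite /tinv !prodf_conj /=.
by rewrite (prodf_mapK _ letter_involutive) sigma_involutive (prodf_map_revK _ letter_involutive).
Qed.

Lemma uword_factor k :
  prodf (uword n b k) =1 prodf (rev (rseq_upto k)) \o prodf (map (sigma n) (iota 1 k)).
Proof.
elim: k => [|k IH] x //.
have iotaSr : iota 1 k.+1 = rcons (iota 1 k) k.+1 by rewrite -cats1 -(iotaD 1 k 1) addn1.
rewrite /uword /rseq_upto iotaSr filter_rcons !map_rcons prodf_rcons /= -/(uword n b k).
case: ifP => bk /=; first by rewrite prodf_rcons IH.
rewrite map_rcons rev_rcons prodf_rcons /= -/(rseq_upto k) -[RHS in tinv _ _ _ RHS]IH.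
rewrite /tinv prodf_conj /=.
by rewrite (prodf_mapK _ letter_involutive) sigma_involutive.
Qed.

Lemma rseq_upto_conj k x :
  prodf (rseq_upto k) (tinv n b k.+1 (prodf (rev (rseq_upto k)) x))
  = prodf (map (sigma n) (iota 1 k ++ k.+1 :: rev (iota 1 k))) x.
Proof.
set R := rseq_upto k; set W := map (sigma n) (iota 1 k).
have uword_inv : prodf (rev (uword n b k)) =1 prodf (rev W) \o prodf R.
  move=> y; have uword_z : prodf (uword n b k) (prodf (rev W) (prodf R y)) = y.
    rewrite uword_factor /= (prodf_map_revK _ sigma_involutive).
    exact: (prodf_mapK _ tinv_involutive).
  by rewrite -{1}uword_z (prodf_mapK _ letter_involutive).
rewrite /tinv prodf_conj /= uword_inv /= (prodf_map_revK _ tinv_involutive).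
rewrite uword_factor /= (prodf_map_revK _ tinv_involutive).
by rewrite map_cat /= map_rev prodf_conj.
Qed.
End Subword.

Theorem lemma5p16 (n : nat) (hn : (2 <= n)%N) (b : seq bool)
    (hb : size b = (n * (n - 1))%N) (j : nat) (hj : (j < size (skips b))%N) :
  let r := rseq n b in
  let i := nth 0%N (skips b) j in
  forall x : int,
    prodf (take j r ++ nth id r j :: rev (take j r)) x
    = refl n 0 (i + (i.-1 %/ n.-1))%N%:Z x.
Proof.
move=> r i x.
have n_neq1 : n != 1%N by rewrite neq_ltn hn orbT.
have /[!(mem_filter, mem_iota)] /and3P[_ i_gt0 _] : i \in skips b by exact: mem_nth.
have take_r : take j r = rseq_upto n b i.-1.
  by rewrite /r /rseq -map_take take_filter_iota // subn1.
have nth_r : nth id r j = tinv n b i by rewrite /r /rseq (nth_map 0%N).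
rewrite take_r nth_r prodf_conj /= -(prednK i_gt0) rseq_upto_conj //.
exact: sigma_word_conj.
Qed.
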